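(* For the root system of type $C_3$ (Bourbaki numbering, $\alpha_3$ long) one has $\partial_3(x_3)=\partial_2\partial_3\partial_2(x_2^3)=\partial_1\partial_2\partial_3\partial_2\partial_1(x_1^5)=1$, and consequently $\partial_1\partial_2\partial_3\partial_2\partial_1\partial_2\partial_3\partial_2\partial_3(x_1^5x_2^3x_3)=1$ and $ud(C_3)=9$. Likewise, for type $C_2$, $ud(C_2)=4$.
   Context: For a semisimple finite root system $\Sigma$ of rank $n$ with simple roots $\alpha_1,\dots,\alpha_n$, Cartan matrix $c_{i,j}=\alpha_j^\vee(\alpha_i)$ and fundamental weights $x_1,\dots,x_n$ with $\alpha_i=\sum_jc_{i,j}x_j$: let $S=\mathbb{Z}[x_1,\dots,x_n]$, $y_i:=x_i-\alpha_i$, $s_i$ the ring automorphism of $S$ with $s_i(x_i)=y_i$, $s_i(x_j)=x_j$ ($j\ne i$), $\partial_i(p)=(p-s_i(p))/(x_i-y_i)$, and for $w\in W$ with reduced word $s_{i_1}\cdots s_{i_l}$, $\partial_w=\partial_{i_1}\circ\cdots\circ\partial_{i_l}$. The unimodular degree $ud(\Sigma)$ is the maximum of $\deg p$ over monic monomials $p\in S$ such that $\partial_w(p)=1$ for some $w\in W$ (the Weyl group). *)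

From HB Require Import structures.
From mathcomp Require Import all_boot all_order all_algebra.
From mathcomp Require Import multinomials.mpoly.
From Stdlib Require Import ClassicalEpsilon.

Set Implicit Arguments.
Unset Strict Implicit.
Unset Printing Implicit Defensive.
Import GRing.Theory.
Local Open Scope ring_scope.

(* Rank n root system given by its Cartan matrix c : 'M[int]_n with
   c i j = alpha_j^vee(alpha_i); indices are 0-based ('I_n), so the
   paper's alpha_k corresponds to index k-1.  S = Z[x_1,...,x_n] is
   {mpoly int[n]}, x_i = 'X_i (fundamental weights). *)

Section DividedDifferences.
Variable n : nat.
Variable c : 'M[int]_n.

Definition alpha (i : 'I_n) : {mpoly int[n]} :=
  \sum_(j < n) (c i j)%:MP * 'X_j.

Definition srefl (i : 'I_n) (p : {mpoly int[n]}) : {mpoly int[n]} :=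
  mmap (@mpolyC n int)
    (fun j : 'I_n => if j == i then 'X_i - alpha i else 'X_j) p.

(* partial_i(p) = (p - s_i p) / (x_i - y_i), i.e. the (unique, as S is a
   domain and alpha_i <> 0) q with alpha_i * q = p - s_i p. *)
Definition ddiff (i : 'I_n) (p : {mpoly int[n]}) : {mpoly int[n]} :=
  epsilon (inhabits 0) (fun q => alpha i * q = p - srefl i p).

Definition ddiff_word (w : seq 'I_n) (p : {mpoly int[n]}) : {mpoly int[n]} :=
  foldr ddiff p w.

Definition word_act (w : seq 'I_n) (p : {mpoly int[n]}) : {mpoly int[n]} :=
  foldr srefl p w.

(* w is a reduced word: no shorter word represents the same element of W
   (elements of W being identified with their (faithful) action on S) *)
Definition reduced_word (w : seq 'I_n) : Prop :=
  forall w' : seq 'I_n, (forall p, word_act w' p = word_act w p) ->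
    (size w <= size w')%N.

(* d is the unimodular degree ud: the maximum of deg p over monic monomials
   p = 'X_[m] such that partial_w p = 1 for some w in W
   (partial_w computed along a reduced word of w). *)
Definition is_ud (d : nat) : Prop :=
  (exists (w : seq 'I_n) (m : 'X_{1..n}),
      reduced_word w /\ ddiff_word w 'X_[m] = 1 /\ mdeg m = d) /\
  (forall (w : seq 'I_n) (m : 'X_{1..n}),
      reduced_word w -> ddiff_word w 'X_[m] = 1 -> (mdeg m <= d)%N).

End DividedDifferences.

Definition mx_of_seq (n : nat) (s : seq (seq int)) : 'M[int]_n :=
  \matrix_(i < n, j < n) nth 0 (nth [::] s i) j.

(* Bourbaki numbering, alpha_n long.  c i j = alpha_j^vee(alpha_i). *)
Definition cartanC3 : 'M[int]_3 :=
  mx_of_seq 3 [:: [:: 2; -1; 0]; [:: -1; 2; -1]; [:: 0; -2; 2]].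
Definition cartanC2 : 'M[int]_2 :=
  mx_of_seq 2 [:: [:: 2; -1]; [:: -2; 2]].

Definition i1 : 'I_3 := @Ordinal 3 0 isT.
Definition i2 : 'I_3 := @Ordinal 3 1 isT.
Definition i3 : 'I_3 := @Ordinal 3 2 isT.

From HB Require Import structures.
From mathcomp Require Import all_boot all_order all_algebra.
From mathcomp Require Import multinomials.mpoly.
From mathcomp Require Import ring.
From Stdlib Require Import ClassicalEpsilon.
Local Open Scope ring_scope.
Import GRing.Theory.
Set Implicit Arguments.
Unset Strict Implicit.
Unset Printing Implicit Defensive.

(* For every Cartan matrix whose simple roots alpha_i are nonzero:
   - s_i is a ring endomorphism of S = Z[x_1..x_n], partial_i p is the unique
     q with alpha_i * q = p - s_i p, and partial_i is linear over
     s_i-invariant polynomials;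
   - s_i preserves homogeneity and partial_i lowers the degree by one, so
     partial_w (x^m) = 1 forces deg x^m <= length w;
   - hence ud equals the maximal length of a reduced word, provided some
     unimodular monomial attains it (is_ud_intro).
   Reduced words are handled through the integer matrix recording the action
   of a word on x_1..x_n: a breadth-first enumeration of these matrices
   saturates at word length 9 for C_3 and 4 for C_2, which bounds reduced
   words, and exhibits reduced words of those lengths.
   Finally the divided differences of the theorem are computed explicitly;
   the nine-letter identity for C_3 (and the four-letter one for C_2) follows
   from the shorter ones by linearity over invariants. *)


Section DividedDifferences.
Variable n : nat.
Variable c : 'M[int]_n.
Implicit Types (i j : 'I_n) (p q : {mpoly int[n]}) (w : seq 'I_n).

Lemma mpoly_ring_ind (P : {mpoly int[n]} -> Prop) :
  (forall k, P k%:MP) -> (forall j, P 'X_j) ->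
  (forall p q, P p -> P q -> P (p + q)) ->
  (forall p q, P p -> P q -> P (p * q)) -> forall p, P p.
Proof.
move=> PC PX PD PM; elim/mpolyind => [|k m p _ _ Pp]; first by rewrite -mpolyC0.
apply: (PD) => //; rewrite -mul_mpolyC; apply: (PM) => //.
rewrite mpolyXE_id; elim/big_rec: _ => [|j x _ Px]; first by rewrite -mpolyC1.
apply: (PM) => //; elim: (m j) => [|e IHe]; first by rewrite expr0 -mpolyC1.
by rewrite exprS; apply: (PM).
Qed.

Lemma mcoeff_linear_form (f : 'I_n -> int) j :
  (\sum_(k < n) (f k)%:MP * 'X_k : {mpoly int[n]})@_U_(j) = f j.
Proof.
rewrite raddf_sum (bigD1 j) //= big1 ?addr0 => [|k /negbTE nkj].
  by rewrite mul_mpolyC mcoeffZ mcoeffXU eqxx mulr1.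
by rewrite mul_mpolyC mcoeffZ mcoeffXU nkj mulr0.
Qed.

Lemma alpha_neq0 i : c i i != 0 -> alpha c i != 0.
Proof.
apply: contraNneq => alpha0.
by rewrite -(mcoeff_linear_form (c i) i) -/(alpha c i) alpha0 mcoeff0.
Qed.

Lemma srefl_is_mmap i :
  srefl c i = mmap (@mpolyC n int)
                   (fun j => if j == i then 'X_i - alpha c i else 'X_j).
Proof. by []. Qed.

HB.instance Definition _ i := GRing.RMorphism.copy (srefl c i)
  (mmap (@mpolyC n int) (fun j => if j == i then 'X_i - alpha c i else 'X_j)).

Lemma sreflC i k : srefl c i k%:MP = k%:MP.
Proof. by rewrite srefl_is_mmap mmapC. Qed.

Lemma sreflX i j :
  srefl c i 'X_j = if j == i then 'X_i - alpha c i else 'X_j.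
Proof. by rewrite srefl_is_mmap mmapX mmap1U. Qed.

Lemma srefl_fixX i j e : j != i -> srefl c i ('X_j ^+ e) = 'X_j ^+ e.
Proof. by move=> /negbTE nji; rewrite rmorphXn /= sreflX nji. Qed.

Lemma ddiff_exists i p : exists q, alpha c i * q = p - srefl c i p.
Proof.
elim/mpoly_ring_ind: p => [k|j|p q [dp Ep] [dq Eq]|p q [dp Ep] [dq Eq]].
- by exists 0; rewrite sreflC mulr0 subrr.
- rewrite sreflX; case: eqP => [->|_]; last by exists 0; rewrite mulr0 subrr.
  by exists 1; rewrite mulr1 opprB addrC subrK.
- by exists (dp + dq); rewrite rmorphD /= mulrDr Ep Eq opprD addrACA.
- exists (dp * q + srefl c i p * dq).
  by rewrite rmorphM /= mulrDr mulrA Ep mulrCA Eq mulrBl mulrBr addrA subrK.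
Qed.

Lemma ddiff_spec i p : alpha c i * ddiff c i p = p - srefl c i p.
Proof. exact: (epsilon_spec _ _ (ddiff_exists i p)). Qed.

Lemma word_act_eq w w' :
  (forall j, word_act c w 'X_j = word_act c w' 'X_j) ->
  forall p, word_act c w p = word_act c w' p.
Proof.
have actC v k : word_act c v k%:MP = k%:MP.
  by elim: v => //= i v ->; rewrite sreflC.
have actD v p q : word_act c v (p + q) = word_act c v p + word_act c v q.
  by elim: v => //= i v ->; rewrite rmorphD.
have actM v p q : word_act c v (p * q) = word_act c v p * word_act c v q.
  by elim: v => //= i v ->; rewrite rmorphM.
move=> eqX; elim/mpoly_ring_ind => [k|j|p q Ep Eq|p q Ep Eq].
- by rewrite !actC.
- exact: eqX.
- by rewrite !actD Ep Eq.
- by rewrite !actM Ep Eq.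
Qed.

Hypothesis alpha_nz : forall i, alpha c i != 0.

(* Since S is a domain, partial_i p is the unique quotient. *)
Lemma ddiffE i p q : alpha c i * q = p - srefl c i p -> ddiff c i p = q.
Proof. by move=> Eq; apply: (mulfI (alpha_nz i)); rewrite ddiff_spec Eq. Qed.

Lemma ddiffXii i : ddiff c i 'X_i = 1.
Proof. by apply: ddiffE; rewrite sreflX eqxx mulr1 opprB addrC subrK. Qed.

Lemma ddiff_fixed_mul i p q :
  srefl c i p = p -> ddiff c i (p * q) = p * ddiff c i q.
Proof.
by move=> fix_p; apply: ddiffE; rewrite rmorphM /= fix_p mulrCA ddiff_spec mulrBr.
Qed.

Lemma ddiff_word_cat w1 w2 p :
  ddiff_word c (w1 ++ w2) p = ddiff_word c w1 (ddiff_word c w2 p).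
Proof. exact: foldr_cat. Qed.

Lemma ddiff_word_fixed_mul w p q :
  (forall i, i \in w -> srefl c i p = p) ->
  ddiff_word c w (p * q) = p * ddiff_word c w q.
Proof.
elim: w => [|i w IHw] //= fix_p.
rewrite IHw => [|k kw]; last by apply: fix_p; rewrite inE kw orbT.
by rewrite ddiff_fixed_mul // fix_p // mem_head.
Qed.

Lemma ddiff_word_Xpow_mul w j e q : j \notin w ->
  ddiff_word c w ('X_j ^+ e * q) = 'X_j ^+ e * ddiff_word c w q.
Proof.
move=> jw; apply: ddiff_word_fixed_mul => i iw; apply: srefl_fixX.
by apply: contraNneq jw => ->.
Qed.

(* Degree bookkeeping: s_i maps the variables to linear forms, so it preserves
   homogeneity, and then partial_i lowers the degree by exactly one. *)
Lemma X_homog j : ('X_j : {mpoly int[n]}) \is 1.-homog.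
Proof. by rewrite dhomogX; apply/eqP; apply: mdeg1. Qed.

Lemma alpha_homog i : alpha c i \is 1.-homog.
Proof.
by apply: rpred_sum => j _; rewrite mul_mpolyC; apply/rpredZ/X_homog.
Qed.

Lemma srefl_homog i d p : p \is d.-homog -> srefl c i p \is d.-homog.
Proof.
have image_homog j : (if j == i then 'X_i - alpha c i else 'X_j) \is 1.-homog.
  by case: eqP => _; rewrite ?rpredB ?alpha_homog ?X_homog.
move/dhomogP=> degp; rewrite srefl_is_mmap (mpolyE p) raddf_sum big_seq /=.
apply: rpred_sum => m /degp <-; rewrite mmapZ mmapX mul_mpolyC; apply: rpredZ.
rewrite /= mdegE /mmap1; elim/big_rec2: _ => [|k e x _ xhom]; first exact: dhomog1.
by have := dhomogM (dhomogMn (m k) (image_homog k)) xhom; rewrite mul1n.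
Qed.

Lemma pihomog_mul_linear a q d : a \is 1.-homog ->
  pihomog mdeg d.+1 (a * q) = a * pihomog mdeg d q.
Proof.
move=> ahom; have dK : (d < maxn (msize q) d.+1)%N by rewrite leq_maxr.
rewrite {1}(pihomog_partitionE (leq_maxl (msize q) d.+1)) mulr_sumr raddf_sum /=.
rewrite (bigD1 (Ordinal dK)) //= big1 ?addr0.
  by rewrite pihomog_dE // (dhomogM ahom) ?pihomogP.
move=> k /eqP nkd; apply: (@pihomog_ne0 _ _ _ (1 + k)%N).
  by apply/eqP => -[kd]; apply: nkd; apply: val_inj.
by apply: (dhomogM ahom); exact: pihomogP.
Qed.

Lemma ddiff_homog i d p : p \is d.+1.-homog -> ddiff c i p \is d.-homog.
Proof.
move=> phom; have rhom : p - srefl c i p \is d.+1.-homog.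
  by rewrite rpredB ?srefl_homog.
suff -> : ddiff c i p = pihomog mdeg d (ddiff c i p) by exact: pihomogP.
apply: (mulfI (alpha_nz i)).
by rewrite -pihomog_mul_linear ?alpha_homog // ddiff_spec pihomog_dE.
Qed.

Lemma ddiff_word_homog w d p :
  p \is (size w + d).-homog -> ddiff_word c w p \is d.-homog.
Proof.
elim: w d => [|i w IHw] d //= phom.
by apply: ddiff_homog; apply: IHw; rewrite addnS.
Qed.

Lemma ddiff_word_monomial_deg w m :
  ddiff_word c w 'X_[m] = 1 -> (mdeg m <= size w)%N.
Proof.
move=> one; rewrite leqNgt; apply/negP => short_w.
have := @ddiff_word_homog w (mdeg m - size w) 'X_[m].
rewrite subnKC ?(ltnW short_w) // dhomogX eqxx one => /(_ isT) one_hom.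
have := dhomog_uniq (oner_neq0 _) one_hom (dhomog1 _ _).
by move/eqP; rewrite subn_eq0 leqNgt short_w.
Qed.

Lemma is_ud_intro d :
  (forall w, reduced_word c w -> (size w <= d)%N) ->
  (exists w m, [/\ reduced_word c w, ddiff_word c w 'X_[m] = 1 & mdeg m = d]) ->
  is_ud c d.
Proof.
move=> short [w [m [red_w one deg_m]]]; split; first by exists w, m.
by move=> w' m' red_w' /ddiff_word_monomial_deg/leq_trans; apply; apply: short.
Qed.

End DividedDifferences.

Section WeylOrbit.
Variables (n : nat) (rows : seq (seq int)).
Let c : 'M[int]_n := mx_of_seq n rows.
Implicit Types (i j : 'I_n) (v : seq int) (w : seq 'I_n).

Definition linear_form v : {mpoly int[n]} :=
  \sum_(k < n) (nth 0 v k)%:MP * 'X_k.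

(* Coordinates of s_i applied to a linear form: v - v_i * (row i of c).
   The index is a plain natural number, so that enumeration computes. *)
Definition reflect_coords (i : nat) v : seq int :=
  mkseq (fun k => nth 0 v k - nth 0 v i * nth 0 (nth [::] rows i) k) n.

Lemma srefl_linear_form i v :
  srefl c i (linear_form v) = linear_form (reflect_coords i v).
Proof.
rewrite /linear_form raddf_sum /=.
under eq_bigr do rewrite rmorphM /= sreflC sreflX.
have image k : (if k == i then 'X_i - alpha c i else 'X_k) =
               'X_k - (k == i)%:R * alpha c i.
  by case: eqP => [->|_]; rewrite ?mul1r ?mul0r ?subr0.
under eq_bigr do rewrite image mulrBr.
rewrite sumrB [X in _ - X](bigD1 i) //= eqxx mul1r.
rewrite [X in _ - (_ + X)]big1 ?addr0; last first.
  by move=> k /negbTE ->; rewrite mul0r mulr0.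
rewrite /alpha mulr_sumr -sumrB; apply: eq_bigr => k _.
by rewrite nth_mkseq // mxE mpolyCB mpolyCM mulrBl mulrA.
Qed.

(* coords w is the coordinate matrix of the action of w: its j-th row
   encodes word_act c w x_j. *)
Definition identity_coords : seq (seq int) :=
  mkseq (fun a => mkseq (fun b => if a == b then 1 else 0) n) n.

Definition coords w : seq (seq int) :=
  foldr (fun i => map (reflect_coords i)) identity_coords w.

Lemma size_coords w : size (coords w) = n.
Proof.
elim: w => [|i w IHw] /=; first by rewrite /identity_coords size_mkseq.
by rewrite size_map.
Qed.

Lemma size_coords_row w r : r \in coords w -> size r = n.
Proof.
by case: w => [|i w]; rewrite /= ?/identity_coords => /mapP [r' _ ->];
  rewrite size_mkseq.
Qed.

Lemma word_act_X w j : word_act c w 'X_j = linear_form (nth [::] (coords w) j).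
Proof.
elim: w => [|i w IHw] /=; last first.
  by rewrite IHw srefl_linear_form (nth_map [::]) // size_coords.
rewrite /linear_form /identity_coords nth_mkseq // (bigD1 j) //=.
rewrite nth_mkseq // eqxx mul1r.
rewrite big1 ?addr0 // => k nkj; rewrite nth_mkseq //.
by case: eqP => [/val_inj kj|_]; [rewrite kj eqxx in nkj | rewrite mul0r].
Qed.

Lemma word_act_coords w w' :
  (forall p, word_act c w p = word_act c w' p) <-> coords w = coords w'.
Proof.
split=> [same_act|same_coords]; last first.
  by apply: word_act_eq => j; rewrite !word_act_X same_coords.
apply: (@eq_from_nth _ [::]); rewrite !size_coords // => j jn.
have := same_act 'X_(Ordinal jn); rewrite !word_act_X /= => same_row.
apply: (@eq_from_nth _ 0); rewrite ?(size_coords_row (mem_nth _ _)) ?size_coords //.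
move=> k kn; have := congr1 (mcoeff U_(Ordinal kn)) same_row.
by rewrite !mcoeff_linear_form.
Qed.

Definition grow (B : seq (seq (seq int))) : seq (seq (seq int)) :=
  undup ([seq map (reflect_coords k) s | s <- B, k <- iota 0 n] ++ B).

Definition ball k : seq (seq (seq int)) := iter k grow [:: identity_coords].

Lemma mem_ball k s :
  s \in ball k <-> exists2 w, (size w <= k)%N & coords w = s.
Proof.
elim: k s => [|k IHk] s.
  by rewrite inE; split=> [/eqP ->|[[|//] _ <-]]; first by exists [::].
rewrite /= -/(ball k) mem_undup mem_cat; split.
  case/orP=> [/allpairsP [[s' i] /= [/IHk [w wk <-] + ->]]|/IHk [w wk <-]].
    by rewrite mem_iota => /andP [_ ltin]; exists (Ordinal ltin :: w).
  by exists w; rewrite // ltnW.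
case=> [[|i w] wk <-].
  by apply/orP; right; apply/IHk; exists [::].
apply/orP; left; apply/allpairsP; exists (coords w, nat_of_ord i) => /=.
by rewrite mem_iota ltn_ord; split=> //; apply/IHk; exists w.
Qed.

Lemma reduced_word_size_le N w :
  grow (ball N) = ball N -> reduced_word c w -> (size w <= N)%N.
Proof.
move=> saturated reduced_w.
have ball_stable k : ball (k + N) = ball N.
  by elim: k => //= k IHk; rewrite -/(ball (k + N)) IHk.
have : coords w \in ball (size w + N) by apply/mem_ball; exists w; rewrite ?leq_addr.
rewrite ball_stable => /mem_ball [w' w'N same_coords].
by apply: leq_trans w'N; apply: reduced_w; apply/word_act_coords.
Qed.

Lemma reduced_word_of_new w :
  coords w \notin ball (size w).-1 -> reduced_word c w.
Proof.
move=> new_w w' same_act; rewrite leqNgt; apply: contra new_w => shorter.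
apply/mem_ball; exists w'; last exact/esym/word_act_coords.
by rewrite -ltnS (ltn_predK shorter).
Qed.

End WeylOrbit.

Ltac ddiff_by_computation alpha_neq0 :=
  apply: (ddiffE alpha_neq0);
  rewrite ?(rmorphB, rmorphD, rmorphM, rmorphXn, rmorph_nat, rmorph1) /= !sreflX
          /alpha !big_ord_recr big_ord0 /= !mxE /=; ring.

Definition rowsC3 : seq (seq int) :=
  [:: [:: 2; -1; 0]; [:: -1; 2; -1]; [:: 0; -2; 2]].

Lemma alphaC3_neq0 i : alpha cartanC3 i != 0.
Proof. by apply: alpha_neq0; case: i => [[|[|[|//]]] ?]; rewrite mxE. Qed.

Lemma C3_x3 : ddiff_word cartanC3 [:: i3] 'X_i3 = 1.
Proof. exact: ddiffXii alphaC3_neq0 i3. Qed.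

Lemma C3_x2_cube : ddiff_word cartanC3 [:: i2; i3; i2] ('X_i2 ^+ 3) = 1.
Proof.
have d2 : ddiff cartanC3 i2 ('X_i2 ^+ 3) =
    'X_i1 ^+ 2 - 'X_i1 * 'X_i2 + 2%:R * 'X_i1 * 'X_i3 + 'X_i2 ^+ 2
    - 'X_i2 * 'X_i3 + 'X_i3 ^+ 2.
  by ddiff_by_computation alphaC3_neq0.
have d3 : ddiff cartanC3 i3 ('X_i1 ^+ 2 - 'X_i1 * 'X_i2 + 2%:R * 'X_i1 * 'X_i3
    + 'X_i2 ^+ 2 - 'X_i2 * 'X_i3 + 'X_i3 ^+ 2) = 2%:R * 'X_i1 + 'X_i2.
  by ddiff_by_computation alphaC3_neq0.
have d2' : ddiff cartanC3 i2 (2%:R * 'X_i1 + 'X_i2) = 1.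
  by ddiff_by_computation alphaC3_neq0.
by rewrite /= d2 d3 d2'.
Qed.

Lemma C3_x1_fifth :
  ddiff_word cartanC3 [:: i1; i2; i3; i2; i1] ('X_i1 ^+ 5) = 1.
Proof.
have d1 : ddiff cartanC3 i1 ('X_i1 ^+ 5) =
    'X_i1 ^+ 4 - 2%:R * 'X_i1 ^+ 3 * 'X_i2 + 4%:R * 'X_i1 ^+ 2 * 'X_i2 ^+ 2
    - 3%:R * 'X_i1 * 'X_i2 ^+ 3 + 'X_i2 ^+ 4.
  by ddiff_by_computation alphaC3_neq0.
have d2 : ddiff cartanC3 i2 ('X_i1 ^+ 4 - 2%:R * 'X_i1 ^+ 3 * 'X_i2
    + 4%:R * 'X_i1 ^+ 2 * 'X_i2 ^+ 2 - 3%:R * 'X_i1 * 'X_i2 ^+ 3 + 'X_i2 ^+ 4) =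
    'X_i1 ^+ 2 * 'X_i2 + 'X_i1 ^+ 2 * 'X_i3 - 'X_i1 * 'X_i2 ^+ 2
    - 'X_i1 * 'X_i2 * 'X_i3 + 2%:R * 'X_i2 ^+ 2 * 'X_i3
    - 2%:R * 'X_i2 * 'X_i3 ^+ 2 + 'X_i3 ^+ 3.
  by ddiff_by_computation alphaC3_neq0.
have d3 : ddiff cartanC3 i3 ('X_i1 ^+ 2 * 'X_i2 + 'X_i1 ^+ 2 * 'X_i3
    - 'X_i1 * 'X_i2 ^+ 2 - 'X_i1 * 'X_i2 * 'X_i3 + 2%:R * 'X_i2 ^+ 2 * 'X_i3
    - 2%:R * 'X_i2 * 'X_i3 ^+ 2 + 'X_i3 ^+ 3) =
    'X_i1 ^+ 2 - 'X_i1 * 'X_i2 + 2%:R * 'X_i2 ^+ 2 - 2%:R * 'X_i2 * 'X_i3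
    + 'X_i3 ^+ 2.
  by ddiff_by_computation alphaC3_neq0.
have d2' : ddiff cartanC3 i2 ('X_i1 ^+ 2 - 'X_i1 * 'X_i2 + 2%:R * 'X_i2 ^+ 2
    - 2%:R * 'X_i2 * 'X_i3 + 'X_i3 ^+ 2) = 'X_i1.
  by ddiff_by_computation alphaC3_neq0.
by rewrite /= d1 d2 d3 d2' (ddiffXii alphaC3_neq0).
Qed.

(* The long identity follows from the three short ones: x_1 is fixed by s_2
   and s_3, and x_2 by s_3. *)
Lemma C3_top_monomial :
  ddiff_word cartanC3 [:: i1; i2; i3; i2; i1; i2; i3; i2; i3]
    ('X_i1 ^+ 5 * 'X_i2 ^+ 3 * 'X_i3) = 1.
Proof.
change [:: i1; i2; i3; i2; i1; i2; i3; i2; i3] with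
  ([:: i1; i2; i3; i2; i1] ++ [:: i2; i3; i2] ++ [:: i3]).
have pull_X := ddiff_word_Xpow_mul alphaC3_neq0.
rewrite ddiff_word_cat -mulrA pull_X // ddiff_word_cat (pull_X [:: i3]) //.
by rewrite C3_x3 mulr1 C3_x2_cube mulr1 C3_x1_fifth.
Qed.

(* The enumeration saturates at length 9 (with the 48 elements of W(C_3)),
   and the word of the theorem is not reached by shorter words. *)
Lemma C3_reduced_words_short w : reduced_word cartanC3 w -> (size w <= 9)%N.
Proof. by apply: (@reduced_word_size_le 3 rowsC3); vm_compute. Qed.

Lemma C3_top_word_reduced :
  reduced_word cartanC3 [:: i1; i2; i3; i2; i1; i2; i3; i2; i3].
Proof. by apply: (@reduced_word_of_new 3 rowsC3); vm_compute. Qed.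

Lemma C3_ud : is_ud cartanC3 9.
Proof.
apply: is_ud_intro; [exact: alphaC3_neq0 | exact: C3_reduced_words_short |].
exists [:: i1; i2; i3; i2; i1; i2; i3; i2; i3], (U_(i1) *+ 5 + U_(i2) *+ 3 + U_(i3))%MM.
split; first exact: C3_top_word_reduced.
  rewrite (_ : 'X_[_] = 'X_i1 ^+ 5 * 'X_i2 ^+ 3 * 'X_i3) ?C3_top_monomial //.
  by rewrite !mpolyXn !mpolyXD.
by rewrite !mulmS !mulm0n !mdegD !mdeg1 ?mdeg0.
Qed.

Definition rowsC2 : seq (seq int) := [:: [:: 2; -1]; [:: -2; 2]].
Definition j1 : 'I_2 := @Ordinal 2 0 isT.
Definition j2 : 'I_2 := @Ordinal 2 1 isT.

Lemma alphaC2_neq0 i : alpha cartanC2 i != 0.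
Proof. by apply: alpha_neq0; case: i => [[|[|//]] ?]; rewrite mxE. Qed.

Lemma C2_x1_cube : ddiff_word cartanC2 [:: j1; j2; j1] ('X_j1 ^+ 3) = 1.
Proof.
have d1 : ddiff cartanC2 j1 ('X_j1 ^+ 3) = 'X_j1 ^+ 2 - 'X_j1 * 'X_j2 + 'X_j2 ^+ 2.
  by ddiff_by_computation alphaC2_neq0.
have d2 : ddiff cartanC2 j2 ('X_j1 ^+ 2 - 'X_j1 * 'X_j2 + 'X_j2 ^+ 2) = 'X_j1.
  by ddiff_by_computation alphaC2_neq0.
by rewrite /= d1 d2 (ddiffXii alphaC2_neq0).
Qed.

Lemma C2_top_monomial :
  ddiff_word cartanC2 [:: j1; j2; j1; j2] ('X_j1 ^+ 3 * 'X_j2) = 1.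
Proof.
change [:: j1; j2; j1; j2] with ([:: j1; j2; j1] ++ [:: j2]).
rewrite ddiff_word_cat (ddiff_word_Xpow_mul alphaC2_neq0 (w := [:: j2])) //.
by rewrite (ddiffXii alphaC2_neq0 j2 : ddiff_word _ [:: j2] _ = 1) mulr1 C2_x1_cube.
Qed.

Lemma C2_ud : is_ud cartanC2 4.
Proof.
apply: is_ud_intro; [exact: alphaC2_neq0 | |].
  by move=> w; apply: (@reduced_word_size_le 2 rowsC2); vm_compute.
exists [:: j1; j2; j1; j2], (U_(j1) *+ 3 + U_(j2))%MM.
split; first by apply: (@reduced_word_of_new 2 rowsC2); vm_compute.
  rewrite (_ : 'X_[_] = 'X_j1 ^+ 3 * 'X_j2) ?C2_top_monomial //.
  by rewrite !mpolyXn !mpolyXD.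
by rewrite !mulmS !mulm0n !mdegD !mdeg1 ?mdeg0.
Qed.

Theorem mainTheorem6 :
  ddiff_word cartanC3 [:: i3] 'X_i3 = 1 /\
      ddiff_word cartanC3 [:: i2; i3; i2] ('X_i2 ^+ 3) = 1 /\
      ddiff_word cartanC3 [:: i1; i2; i3; i2; i1] ('X_i1 ^+ 5) = 1 /\
      ddiff_word cartanC3 [:: i1; i2; i3; i2; i1; i2; i3; i2; i3]
        ('X_i1 ^+ 5 * 'X_i2 ^+ 3 * 'X_i3) = 1 /\
      is_ud cartanC3 9 /\
  is_ud cartanC2 4.
Proof.
split; first exact: C3_x3.
split; first exact: C3_x2_cube.
split; first exact: C3_x1_fifth.
split; first exact: C3_top_monomial.
by split; [exact: C3_ud | exact: C2_ud].
Qed.
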